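(* Consider a single-antenna jammer ($I=1$) with a fixed (deterministic) transmit vector $\mathbf w_D\in\mathbb C^D$, so $\mathbf W_D=\mathbf w_D^{\mathrm T}$, and let $\mathbf S_D$ be uniformly distributed on $\mathcal S^{U\times D}$. Then the probability (over $\mathbf S_D$) that the jammer is eclipsed (with perfect CSI) is at most $$p_e(\mathbf w_D)=\begin{cases}1 & \text{if } \mathbf w_D=\mathbf 0,\\[2pt] 1-\Big(1-\dfrac{2^{\|\mathbf w_D\|_0}-1}{4^{\|\mathbf w_D\|_0-1}}\Big)^U & \text{otherwise,}\end{cases}$$ where $\|\mathbf w_D\|_0$ is the number of nonzero entries of $\mathbf w_D$.
   Context: Let $U,D$ be positive integers and $\mathcal S=\{(\pm1\pm i)/\sqrt2\}\subset\mathbb C$ (QPSK). Eclipsing with perfect CSI (single-antenna case): given $\mathbf S_D\in\mathcal S^{U\times D}$ and $\mathbf w_D\in\mathbb C^D$, the jammer is eclipsed if there exists $\tilde{\mathbf S}_D\in\mathcal S^{U\times D}\setminus\{\mathbf S_D\}$ such that the $(U+1)\times D$ matrix $\begin{bmatrix}\mathbf S_D-\tilde{\mathbf S}_D\\ \mathbf w_D^{\mathrm T}\end{bmatrix}$ has rank at most $1$. *)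

From HB Require Import structures.
From mathcomp Require Import all_boot all_order all_algebra.
From mathcomp Require Import reals complex.
Set Implicit Arguments. Unset Strict Implicit. Unset Printing Implicit Defensive.
Import Order.TTheory GRing.Theory Num.Theory.
Local Open Scope ring_scope.

(* A QPSK symbol is indexed by its pair of signs (b1, b2) : bool * bool,
   with true ↦ +1, false ↦ -1; its value is (±1 ± i)/√2 in C = R[i]. *)
Definition sgnb {R : realType} (b : bool) : R := if b then 1 else -1.

Definition qpsk {R : realType} (s : bool * bool) : R[i] :=
  Complex (sgnb s.1 / Num.sqrt (2 : R)) (sgnb s.2 / Num.sqrt (2 : R)).

Definition symb_mx {R : realType} (U D : nat) (S : 'M[bool * bool]_(U, D))
  : 'M[R[i]]_(U, D) := map_mx qpsk S.

(* Eclipsing with perfect CSI (single antenna): exists S~ <> S with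
   rank [S - S~ ; w^T] <= 1.  w : 'rV_D plays the role of w_D^T. *)
Definition eclipsed {R : realType} (U D : nat)
  (S : 'M[bool * bool]_(U, D)) (w : 'rV[R[i]]_D) : bool :=
  [exists St : 'M[bool * bool]_(U, D),
     (St != S) && (\rank (col_mx (symb_mx S - symb_mx St) w) <= 1)%N].

Definition prob_eclipsed {R : realType} (U D : nat) (w : 'rV[R[i]]_D) : R :=
  (#|[set S : 'M[bool * bool]_(U, D) | eclipsed S w]|)%:R
  / (#|{: 'M[bool * bool]_(U, D)}|)%:R.

Definition l0norm {C : nzRingType} (D : nat) (w : 'rV[C]_D) : nat :=
  #|[set j : 'I_D | w 0 j != 0]|.

Definition p_e {R : realType} (U D : nat) (w : 'rV[R[i]]_D) : R :=
  if w == 0 then 1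
  else let k := l0norm w in
       1 - (1 - ((2 ^ k)%:R - 1) / (4 ^ (k - 1))%:R) ^+ U.

From HB Require Import structures.
From mathcomp Require Import all_boot all_order all_algebra.
From mathcomp Require Import reals complex.
From mathcomp Require Import lra zify.
Import Order.TTheory GRing.Theory Num.Theory.
Local Open Scope ring_scope.

(* If S is eclipsed through S~ <> S, the rank condition makes every row of
   S - S~ a multiple c_u w of w, with c_u <> 0 for some row u.  Fix j0 with
   w_j0 <> 0 and put rho_j = w_j / w_j0.  The row S_u is then pinned down by
   s = S_(u,j0), by which components of s are flipped in S~_(u,j0) (three masks),
   and by the requirement that at every other coordinate j its symbol starts a
   QPSK difference equal to rho_j times the difference at j0.  So the "bad" rows
   form a union of product sets (boxes), and a case analysis on rho_j (one of
   +-1, +-i; one of +-1 +- i; or neither) shows that the three boxes belonging to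
   one s contain at most (2^k - 1) 4^(D-k) rows, k = ||w||_0.  A uniform row is
   therefore bad with probability at most (2^k - 1) / 4^(k-1), and S, whose U rows
   are independent, is eclipsed only if one of its rows is bad. *)

Lemma col_mx_rank_le1 {F : fieldType} {m n} {E : 'M[F]_(m, n)} {w : 'rV[F]_n} :
  w != 0 -> (\rank (col_mx E w) <= 1)%N -> exists c : 'cV[F]_m, E = c *m w.
Proof.
move=> w_neq0 rank_le1.
have w_sub : (w <= col_mx E w)%MS by rewrite -addsmxE addsmxSr.
have rank1 : \rank (col_mx E w) = 1%N.
  by apply/eqP; rewrite eqn_leq rank_le1 /=; have := mxrankS w_sub; rewrite rank_rV w_neq0.
have : (col_mx E w <= w)%MS by rewrite -(mxrank_leqif_sup w_sub).2 rank1 rank_rV w_neq0.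
by rewrite col_mx_sub => /andP[/submxP[c ->] _]; exists c.
Qed.

Lemma rV_neq0_entry {K : nzRingType} {n} {w : 'rV[K]_n} :
  w != 0 -> exists j, w 0 j != 0.
Proof.
move=> w_neq0; apply/existsP; apply: contraNT w_neq0; rewrite negb_exists => /forallP w0.
by apply/eqP/rowP => j; rewrite mxE; apply/eqP; have := w0 j; rewrite negbK.
Qed.

Lemma prod_nat_if {I : finType} (P : pred I) (a b : nat) :
  (\prod_i (if P i then a else b) = a ^ #|[set i | P i]| * b ^ #|[set i | ~~ P i]|)%N.
Proof.
rewrite (bigID P) /= -!prod_nat_const; congr (_ * _)%N; apply: eq_big => i; rewrite ?inE //.
  by move=> ->.
by move=> /negbTE ->.
Qed.

Lemma leq_card_bigcup {I T : finType} (A : I -> {set T}) :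
  (#|\bigcup_i A i| <= \sum_i #|A i|)%N.
Proof.
elim/big_rec2: _ => [|i X n _ IH]; first by rewrite cards0.
by apply: leq_trans (leq_card_setU _ _) _; rewrite leq_add2l.
Qed.

Lemma card_bool_pair : #|{: bool * bool}| = 4%N.
Proof. by rewrite card_prod card_bool. Qed.

Lemma card_bool_pairE (A : pred (bool * bool)) :
  #|A| = (A (true, true) + A (true, false) + A (false, true) + A (false, false))%N.
Proof.
rewrite -sum1_card big_mkcond /=.
transitivity (\sum_(a : bool) \sum_(b : bool) (if A (a, b) then 1 else 0))%N.
  by rewrite pair_bigA; apply: eq_bigr => -[].
by rewrite !big_bool /= addnA; do 4 case: (A _).
Qed.

Lemma subset_bool_pairE (A B : pred (bool * bool)) :
  (A \subset B) = [&& A (true, true) ==> B (true, true), A (true, false) ==> B (true, false),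
                      A (false, true) ==> B (false, true) & A (false, false) ==> B (false, false)].
Proof.
apply/subsetP/and4P => [AB | [] ? ? ? ?]; first by split; apply/implyP => /AB.
by case=> [[] []] /=; apply/implyP.
Qed.

Section Sparse3.
Context {T : finType}.
Implicit Types A B : pred T.

Definition sparse3 A1 A2 A3 (c : nat) := (#|A1| + #|A2| + #|A3| <= c)%N.

Definition nested3 A1 A2 A3 (c : nat) :=
  (A3 \subset predI A1 A2) && (c <= #|predI A1 A2|)%N.

Definition sparse_or_nested A1 A2 A3 (c d : nat) :=
  sparse3 A1 A2 A3 c || nested3 A1 A2 A3 d.

Lemma eq_sparse_or_nested {A1 A2 A3 B1 B2 B3} {c d : nat} :
  A1 =1 B1 -> A2 =1 B2 -> A3 =1 B3 ->
  sparse_or_nested A1 A2 A3 c d = sparse_or_nested B1 B2 B3 c d.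
Proof.
move=> eq1 eq2 eq3; have eq12 : predI A1 A2 =1 predI B1 B2 by move=> x /=; rewrite eq1 eq2.
rewrite /sparse_or_nested /sparse3 /nested3.
rewrite !(eq_card eq1, eq_card eq2, eq_card eq3, eq_card eq12).
by rewrite (eq_subset eq3) (eq_subset_r eq12).
Qed.

End Sparse3.

Section Boxes.
Variables (T : finType) (n : nat).
Implicit Types (F : 'I_n -> pred T) (A : {set 'rV[T]_n}).

Definition box F : {set 'rV[T]_n} := [set r : 'rV[T]_n | [forall j, F j (r 0 j)]].

Lemma card_box F : #|box F| = (\prod_j #|F j|)%N.
Proof.
pose ffun_of (r : 'rV[T]_n) : {ffun 'I_n -> T} := [ffun j => r 0 j].
have ffun_ofK : cancel ffun_of (fun f => \row_j f j).
  by move=> r; apply/rowP => j; rewrite !mxE ffunE.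
rewrite -(card_imset _ (can_inj ffun_ofK)).
transitivity #|family F|; last by rewrite card_family foldrE big_map big_enum.
apply: eq_card => f; apply/imsetP/familyP => [[r] |Ff].
  by rewrite inE => /forallP Fr -> j; rewrite /ffun_of ffunE; exact: (Fr j).
exists (\row_j f j); first by rewrite inE; apply/forallP => j; rewrite mxE; exact: (Ff j).
by apply/ffunP => j; rewrite /ffun_of !ffunE mxE.
Qed.

Lemma card_box_le F (g : 'I_n -> nat) :
  (forall j, #|F j| <= g j)%N -> (#|box F| <= \prod_j g j)%N.
Proof. by move=> le_Fg; rewrite card_box; apply: leq_prod => j _. Qed.

Lemma setI_box F G : box F :&: box G = box (fun j => predI (F j) (G j)).
Proof.
apply/setP => r; rewrite !inE; apply/andP/forallP => [[/forallP Fr /forallP Gr] j|FGr].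
  by apply/andP; split; [exact: Fr | exact: Gr].
by split; apply/forallP => j; have /andP[] := FGr j.
Qed.

Lemma subset_box F G : (forall j, {subset F j <= G j}) -> box F \subset box G.
Proof.
move=> FG; apply/subsetP => r; rewrite !inE => /forallP Fr.
by apply/forallP => j; exact: FG (Fr j).
Qed.

Lemma card_all_rows_in m A :
  #|[set S : 'M[T]_(m, n) | [forall u, row u S \in A]]| = (#|A| ^ m)%N.
Proof.
pose rows_of (S : 'M[T]_(m, n)) : {ffun 'I_m -> 'rV[T]_n} := [ffun u => row u S].
have rows_ofK : cancel rows_of (fun f => \matrix_(u, j) f u 0 j).
  by move=> S; apply/matrixP => i j; rewrite !mxE ffunE mxE.
rewrite -(card_imset _ (can_inj rows_ofK)) -[in RHS](card_ord m) -card_ffun_on.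
apply: eq_card => f; apply/imsetP/ffun_onP => [[S] |fA].
  by rewrite inE => /forallP SA -> u; rewrite /rows_of ffunE; exact: (SA u).
exists (\matrix_(u, j) f u 0 j).
  rewrite inE; apply/forallP => u.
  suff -> : row u (\matrix_(u, j) f u 0 j) = f u by exact: fA.
  by apply/rowP => j; rewrite !mxE.
by apply/ffunP => u; apply/rowP => j; rewrite /rows_of ffunE !mxE.
Qed.

Lemma card_some_row_in m A :
  #|[set S : 'M[T]_(m, n) | [exists u, row u S \in A]]| =
  (#|T| ^ (m * n) - (#|T| ^ n - #|A|) ^ m)%N.
Proof.
have -> : [set S : 'M[T]_(m, n) | [exists u, row u S \in A]] =
          ~: [set S | [forall u, row u S \in ~: A]].
  apply/setP => S; rewrite !inE negb_forall.
  by apply: eq_existsb => u; rewrite inE negbK.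
by rewrite cardsCs setCK card_all_rows_in card_mx [#|~: A|]cardsCs setCK card_mx mul1n.
Qed.

Section ThreeBoxes.
Variables (F1 F2 F3 : 'I_n -> pred T) (g h : 'I_n -> nat).
Hypotheses (le_F1g : forall j, (#|F1 j| <= g j)%N) (le_F2g : forall j, (#|F2 j| <= g j)%N)
           (le_F3g : forall j, (#|F3 j| <= g j)%N) (le_hg : forall j, (h j <= g j)%N).
Hypothesis split_F : forall j, sparse_or_nested (F1 j) (F2 j) (F3 j) (g j) (h j).

Local Notation B := (box F1 :|: box F2 :|: box F3).

Lemma card_box3_sparse j1 :
  sparse3 (F1 j1) (F2 j1) (F3 j1) (g j1) -> (#|B| <= \prod_j g j)%N.
Proof.
rewrite /sparse3 (bigD1 j1) //= => sparse_j1.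
set G := (\prod_(j | j != j1) g j)%N.
have le_box F : (forall j, #|F j| <= g j)%N -> (#|box F| <= #|F j1| * G)%N.
  by move=> le_Fg; rewrite card_box (bigD1 j1) //= leq_mul2l leq_prod ?orbT.
apply: leq_trans (leq_card_setU _ _) _.
apply: leq_trans (leq_add (leq_card_setU _ _) (leqnn _)) _.
apply: leq_trans (leq_add (leq_add (le_box _ le_F1g) (le_box _ le_F2g)) (le_box _ le_F3g)) _.
by rewrite -!mulnDl leq_mul2r sparse_j1 orbT.
Qed.

Lemma card_box3_nested :
  (forall j, nested3 (F1 j) (F2 j) (F3 j) (h j)) ->
  (#|B| <= 2 * \prod_j g j - \prod_j h j)%N.
Proof.
move=> nested; have /all_and2[sub_F3 le_h] := fun j => andP (nested j).
have -> : B = box F1 :|: box F2.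
  apply/setUidPl; apply: subset_trans (subsetUl _ _).
  apply: subset_trans (subsetIl _ (box F2)); rewrite setI_box.
  by apply: subset_box => j; apply/subsetP/sub_F3.
rewrite cardsU mul2n -addnn; apply: leq_sub; first by rewrite leq_add ?card_box_le.
by rewrite setI_box card_box; apply: leq_prod => j _.
Qed.

Lemma card_box3 : (#|B| <= 2 * \prod_j g j - \prod_j h j)%N.
Proof.
have [j1 sparse_j1 | not_sparse] := pickP (fun j => sparse3 (F1 j) (F2 j) (F3 j) (g j)).
  apply: leq_trans (card_box3_sparse j1 sparse_j1) _.
  have : (\prod_j h j <= \prod_j g j)%N by apply: leq_prod => j _.
  lia.
apply: card_box3_nested => j.
by have := split_F j; rewrite /sparse_or_nested not_sparse.
Qed.

End ThreeBoxes.
End Boxes.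

Arguments box {T n} F.

(* A QPSK symbol has components bsign b / sqrt 2, so a difference of two symbols
   is sqrt 2 times a pair of half-differences hdiff (b != b') b, each 0 or bsign b.
   [hdiff_src p q] is the set of symbols from which (p, q) is such a pair, and
   [src_scaled m s a b] the set of symbols from which the half-difference of s
   under the flip mask m, multiplied by the complex number a + ib, can start. *)
Definition bsign {K : pzRingType} (b : bool) : K := if b then 1 else -1.
Definition hdiff {K : pzRingType} (flip b : bool) : K := if flip then bsign b else 0.
Definition is_hdiff {K : pzRingType} (t : K) (b : bool) := (t == 0) || (t == bsign b).
Definition hdiff_src {K : pzRingType} (p q : K) : pred (bool * bool) :=
  fun x => is_hdiff p x.1 && is_hdiff q x.2.
Definition src_scaled {K : pzRingType} (m s : bool * bool) (a b : K) :=
  hdiff_src (hdiff m.1 s.1 * a - hdiff m.2 s.2 * b) (hdiff m.1 s.1 * b + hdiff m.2 s.2 * a).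

Lemma src_scaled_int_cases (s : bool * bool) (a b : int) :
  a \in [:: -1; 0; 1] -> b \in [:: -1; 0; 1] -> (a, b) != (0, 0) ->
  sparse_or_nested (src_scaled (true, false) s a b) (src_scaled (false, true) s a b)
                   (src_scaled (true, true) s a b) 2 1.
Proof.
rewrite /sparse_or_nested /sparse3 /nested3 !card_bool_pairE subset_bool_pairE.
by rewrite !inE => /or3P[] /eqP-> /or3P[] /eqP-> // _; case: s => [[] []]; vm_compute.
Qed.

Lemma src_scaled0 {K : pzRingType} m s : src_scaled m s (0 : K) 0 =1 predT.
Proof. by move=> x; rewrite /src_scaled /hdiff_src !mulr0 subr0 addr0 /is_hdiff eqxx. Qed.

Lemma is_hdiff_hdiff {K : pzRingType} f b : is_hdiff (hdiff f b : K) b.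
Proof. by case: f; rewrite /is_hdiff eqxx ?orbT. Qed.

Lemma bsign_mul {K : pzRingType} (b c : bool) : bsign b * bsign c = bsign (b == c) :> K.
Proof. by case: b; case: c; rewrite /bsign /= ?mul1r ?mulrNN ?mulr1. Qed.

Lemma bsign_neg {K : pzRingType} (b : bool) : bsign (~~ b) = - bsign b :> K.
Proof. by case: b; rewrite /bsign ?opprK. Qed.

Lemma is_hdiff_bsignM {K : pzRingType} {c x : bool} {t : K} :
  is_hdiff (bsign c * t) x -> t \in [:: -1; 0; 1].
Proof.
move=> ht; have -> : t = bsign c * (bsign c * t) by rewrite mulrA bsign_mul eqxx mul1r.
move: (bsign c * t) ht => u /orP[] /eqP->; first by rewrite mulr0 !inE eqxx orbT.
by rewrite bsign_mul /bsign; case: (c == x); rewrite !inE eqxx ?orbT.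
Qed.

Section RealDomain.
Variable R : realDomainType.

Lemma bsign_inj : injective (@bsign R).
Proof. by case=> -[] //; rewrite /bsign => e; exfalso; lra. Qed.

Lemma bsign_intr (b : bool) : (bsign b : int)%:~R = bsign b :> R.
Proof. by case: b; rewrite /bsign ?rmorphN rmorph1. Qed.

Lemma is_hdiff_intr (t : int) (b : bool) : is_hdiff (t%:~R : R) b = is_hdiff t b.
Proof. by rewrite /is_hdiff intr_eq0 -bsign_intr eqr_int. Qed.

Lemma hdiff_intr (f b : bool) : (hdiff f b : int)%:~R = hdiff f b :> R.
Proof. by case: f; rewrite /hdiff ?bsign_intr. Qed.

Lemma src_scaled_intr m s (a b : int) :
  src_scaled m s (a%:~R : R) b%:~R =1 src_scaled m s a b.
Proof.
move=> x; rewrite /src_scaled /hdiff_src -!hdiff_intr -!intrM -intrB -intrD.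
by rewrite !is_hdiff_intr.
Qed.

Lemma unit_intr (a : R) :
  a \in [:: -1; 0; 1] -> exists2 k : int, k \in [:: -1; 0; 1] & a = k%:~R.
Proof.
rewrite !inE => /or3P[] /eqP->; [exists (-1) | exists 0 | exists 1];
  by rewrite ?inE ?rmorphN ?rmorph1 ?rmorph0.
Qed.

Lemma card_hdiff_src (p q : R) : (p != 0) || (q != 0) -> (#|hdiff_src p q| <= 2)%N.
Proof.
have hdiff_det (t : R) b c : t != 0 -> is_hdiff t b -> is_hdiff t c -> b = c.
  by move=> t0; rewrite /is_hdiff (negbTE t0) /= => /eqP-> /eqP /bsign_inj.
have le2 (f : bool * bool -> bool) :
  {in hdiff_src p q &, injective f} -> (#|hdiff_src p q| <= 2)%N.
  by move=> f_inj; rewrite -(card_in_imset f_inj) -[2%N]card_bool max_card.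
case/orP=> nz; [apply: (le2 snd) | apply: (le2 fst)];
  move=> [x1 x2] [y1 y2] /andP[/= hx1 hx2] /andP[/= hy1 hy2] /= eq_xy.
  by rewrite eq_xy (hdiff_det _ _ _ nz hx1 hy1).
by rewrite eq_xy (hdiff_det _ _ _ nz hx2 hy2).
Qed.

Lemma card_src_scaled m s (a b : R) :
  m != (false, false) -> (a != 0) || (b != 0) -> (#|src_scaled m s a b| <= 2)%N.
Proof.
move=> m_neq0 ab_neq0; apply: card_hdiff_src; move: ab_neq0; apply: contraLR.
rewrite !negb_or !negbK => /andP[/eqP p0 /eqP q0].
by move: m m_neq0 p0 q0 => [[] []] // _; case: s => [[] []];
  rewrite /hdiff /bsign /= => p0 q0; apply/andP; split; apply/eqP; lra.
Qed.

Lemma src_scaled_single_flip (f : bool) s (a b : R) x :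
  src_scaled (f, ~~ f) s a b x -> (a \in [:: -1; 0; 1]) && (b \in [:: -1; 0; 1]).
Proof.
rewrite /src_scaled /hdiff_src /hdiff; case: f => /=;
  rewrite !mul0r ?subr0 ?addr0 ?sub0r ?add0r => /andP[ha hb].
  by rewrite (is_hdiff_bsignM ha) (is_hdiff_bsignM hb).
by rewrite -mulNr -bsign_neg in ha; rewrite (is_hdiff_bsignM ha) (is_hdiff_bsignM hb).
Qed.

(* Unless both a and b lie in {-1, 0, 1}, the two single-flip sets are empty;
   otherwise the claim is a finite check, carried out over int. *)
Lemma src_scaled_cases s (a b : R) : (a != 0) || (b != 0) ->
  sparse_or_nested (src_scaled (true, false) s a b) (src_scaled (false, true) s a b)
                   (src_scaled (true, true) s a b) 2 1.
Proof.
have [/andP[/unit_intr[ka unit_ka ->] /unit_intr[kb unit_kb ->]] | not_units] :=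
  boolP ((a \in [:: -1; 0; 1]) && (b \in [:: -1; 0; 1])).
  rewrite !intr_eq0 => k_neq0.
  rewrite (eq_sparse_or_nested (src_scaled_intr _ _ _ _) (src_scaled_intr _ _ _ _)
                              (src_scaled_intr _ _ _ _)).
  apply: src_scaled_int_cases => //; move: k_neq0; apply: contraL.
  by rewrite xpair_eqE => /andP[/eqP-> /eqP->].
move=> ab_neq0.
have no_single_flip f : #|src_scaled (f, ~~ f) s a b| = 0%N.
  apply: eq_card0 => x; apply/negbTE; apply: contra not_units.
  exact: src_scaled_single_flip.
apply/orP; left; rewrite /sparse3 (no_single_flip true) (no_single_flip false).
exact: card_src_scaled.
Qed.

End RealDomain.

Section Qpsk.
Variable R : realType.
Local Notation sqrt2 := (Num.sqrt (2 : R)).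
Local Open Scope complex_scope.

Lemma sqrt2_neq0 : sqrt2 != 0.
Proof. by rewrite gt_eqF // sqrtr_gt0 ltr0n. Qed.

Lemma sqrt2C_neq0 : sqrt2%:C != 0.
Proof. by rewrite eq_complex negb_and sqrt2_neq0. Qed.

Lemma sgnb_sub_div (b c : bool) :
  sgnb b / sqrt2 - sgnb c / sqrt2 = sqrt2 * hdiff (b != c) b.
Proof.
apply: (mulIf sqrt2_neq0); rewrite -mulrBl divfK ?sqrt2_neq0 //.
rewrite mulrAC -expr2 sqr_sqrtr ?ler0n //.
by case: b; case: c; rewrite /sgnb /hdiff /bsign /=; lra.
Qed.

Lemma qpsk_sub (x y : bool * bool) :
  qpsk x - qpsk y =
  sqrt2%:C * Complex (hdiff (x.1 != y.1) x.1) (hdiff (x.2 != y.2) x.2).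
Proof.
case: x y => [x1 x2] [y1 y2]; apply/eqP.
by rewrite eq_complex /= !sgnb_sub_div !mul0r subr0 addr0 !eqxx.
Qed.

Lemma hdiff_src_of_qpsk_sub x y (t : R[i]) :
  qpsk x - qpsk y = sqrt2%:C * t -> hdiff_src (complex.Re t) (complex.Im t) x.
Proof.
by rewrite qpsk_sub => /(mulfI sqrt2C_neq0) <-; rewrite /hdiff_src !is_hdiff_hdiff.
Qed.

Lemma src_scaled_of_qpsk_sub s s' x y (rho : R[i]) :
  qpsk x - qpsk y = (qpsk s - qpsk s') * rho ->
  src_scaled (s.1 != s'.1, s.2 != s'.2) s (complex.Re rho) (complex.Im rho) x.
Proof. by rewrite [qpsk s - _]qpsk_sub -mulrA => /hdiff_src_of_qpsk_sub; case: rho. Qed.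

Lemma qpsk_inj : injective (@qpsk R).
Proof.
move=> x y /eqP; rewrite -subr_eq0 qpsk_sub mulf_eq0 (negbTE sqrt2C_neq0) eq_complex /=.
by case: x y => [[] []] [[] []]; rewrite /hdiff /bsign /= ?eqxx ?oppr_eq0 ?oner_eq0.
Qed.

Lemma complex_neq0 (z : R[i]) : z != 0 -> (complex.Re z != 0) || (complex.Im z != 0).
Proof. by case: z => a b; rewrite eq_complex negb_and. Qed.

End Qpsk.

Lemma ratio_some_hit_le {R : realFieldType} {N b : nat} (U : nat) {q : R} :
  (0 < N)%N -> (b <= N)%N -> b%:R / N%:R <= q -> q <= 1 ->
  (N ^ U - (N - b) ^ U)%:R / (N ^ U)%:R <= 1 - (1 - q) ^+ U.
Proof.
move=> N_gt0 le_bN le_frac_q le_q1.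
have N_neq0 : N%:R != 0 :> R by rewrite pnatr_eq0 -lt0n.
have le_pow : ((N - b) ^ U <= N ^ U)%N by case: U => // U; rewrite leq_exp2r // leq_subr.
rewrite natrB // mulrBl !natrX divff ?expf_neq0 // -expr_div_n natrB // mulrBl divff //.
rewrite lerD2l lerN2; apply: lerXn2r; rewrite ?nnegrE ?subr_ge0 ?lerD2l ?lerN2 //.
exact: le_trans le_frac_q le_q1.
Qed.

Lemma natr_pow2_sub1 {R : pzRingType} (k : nat) : (2 ^ k - 1)%:R = (2 ^ k)%:R - 1 :> R.
Proof. by rewrite natrB ?expn_gt0. Qed.

Lemma pow2_ratio_le1 {R : realFieldType} (k : nat) :
  (0 < k)%N -> ((2 ^ k)%:R - 1) / (4 ^ (k - 1))%:R <= 1 :> R.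
Proof.
move=> k_gt0; rewrite -natr_pow2_sub1 ler_pdivrMr ?ltr0n ?expn_gt0 // mul1r ler_nat.
case: k k_gt0 => // k _; rewrite subSS subn0 expnS -[4%N]/(2 * 2)%N expnMn.
have : (0 < 2 ^ k)%N by rewrite expn_gt0.
move: (2 ^ k)%N => x; nia.
Qed.

Section BadRows.
Variables (R : realType) (n : nat) (w : 'rV[R[i]]_n) (j0 : 'I_n).
Hypothesis w_j0 : w 0 j0 != 0.
Local Notation ratio j := (w 0 j / w 0 j0).

(* [box (bad_coord s m)] contains every row r with r_j0 = s such that r - t is
   proportional to w for some t whose entry at j0 differs from s exactly in the
   components flagged by m. *)
Definition bad_coord (s m : bool * bool) (j : 'I_n) : pred (bool * bool) :=
  if j == j0 then xpred1 s else src_scaled m s (complex.Re (ratio j)) (complex.Im (ratio j)).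

Definition bad_rows_at (s : bool * bool) : {set 'rV[bool * bool]_n} :=
  box (bad_coord s (true, false)) :|: box (bad_coord s (false, true))
  :|: box (bad_coord s (true, true)).

Definition bad_rows : {set 'rV[bool * bool]_n} := \bigcup_s bad_rows_at s.

Lemma bad_row_of_multiple {r t : 'rV[bool * bool]_n} (c : R[i]) :
  t != r -> (forall j, qpsk (r 0 j) - qpsk (t 0 j) = c * w 0 j) -> r \in bad_rows.
Proof.
move=> t_neq_r r_sub_t; set s := r 0 j0; set s' := t 0 j0.
have sub_ratio j : qpsk (r 0 j) - qpsk (t 0 j) = (qpsk s - qpsk s') * ratio j.
  by rewrite !r_sub_t -mulrA [w 0 j0 * _]mulrCA divff // mulr1.
set m := (s.1 != s'.1, s.2 != s'.2).
have m_neq0 : m != (false, false).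
  apply: contraNneq t_neq_r; rewrite /m => -[/negbFE/eqP eq1 /negbFE/eqP eq2].
  have eq_s : s = s' by rewrite [s]surjective_pairing eq1 eq2 -surjective_pairing.
  apply/eqP/rowP => j; apply: qpsk_inj; apply/esym/subr0_eq.
  by apply: etrans (sub_ratio j) _; rewrite eq_s subrr mul0r.
have r_in_box : r \in box (bad_coord s m).
  rewrite inE; apply/forallP => j; rewrite /bad_coord; case: eqP => [->|_] /=; first exact: eqxx.
  exact: src_scaled_of_qpsk_sub (sub_ratio j).
apply/bigcupP; exists s => //; rewrite !inE.
by move: m m_neq0 r_in_box => [[] []] // _; rewrite inE => ->; rewrite ?orbT.
Qed.

Lemma eclipsed_bad_row m (S : 'M[bool * bool]_(m, n)) :
  eclipsed S w -> [exists u, row u S \in bad_rows].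
Proof.
case/existsP => St /andP[St_neq_S rank_le1].
have w_neq0 : w != 0 by apply: contraNneq w_j0 => ->; rewrite mxE.
have [c /matrixP diff_eq] := col_mx_rank_le1 w_neq0 rank_le1.
have [u row_neq] : exists u, row u St != row u S.
  apply/existsP; apply: contraNT St_neq_S; rewrite negb_exists => /forallP same_rows.
  by apply/eqP/row_matrixP => u; apply/eqP; have := same_rows u; rewrite negbK.
apply/existsP; exists u; apply: (bad_row_of_multiple (c u 0) row_neq) => j.
by have := diff_eq u j; rewrite !mxE big_ord1.
Qed.

Lemma card_eclipsed_le m :
  (#|[set S : 'M[bool * bool]_(m, n) | eclipsed S w]| <=
   (4 ^ n) ^ m - (4 ^ n - #|bad_rows|) ^ m)%N.
Proof.
rewrite -card_bool_pair -expnM mulnC -card_some_row_in.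
by apply/subset_leq_card/subsetP => S; rewrite !inE; apply: eclipsed_bad_row.
Qed.

Let g j := if j == j0 then 1%N else if w 0 j == 0 then 4%N else 2%N.
Let h j := if w 0 j == 0 then 4%N else 1%N.

Lemma card_bad_rows_at s : (#|bad_rows_at s| <= 2 * \prod_j g j - \prod_j h j)%N.
Proof.
have le_bad_coord_g m : m != (false, false) -> forall j, (#|bad_coord s m j| <= g j)%N.
  move=> m_neq0 j; rewrite /bad_coord /g; case: eqP => _; first by rewrite card1.
  case: ifP => w_j; first by rewrite -card_bool_pair max_card.
  by apply: card_src_scaled => //; apply: complex_neq0; rewrite mulf_neq0 ?invr_neq0 ?w_j.
apply: card_box3; try exact: le_bad_coord_g.
  by move=> j; rewrite /g /h; case: (j =P j0) => [->|_]; rewrite ?(negbTE w_j0) //; case: ifP.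
move=> j; rewrite /bad_coord /g /h; case: (j =P j0) => [->|_].
  rewrite (negbTE w_j0); apply/orP; right; apply/andP; split.
    by apply/subsetP => x xs; apply/andP.
  by apply/card_gt0P; exists s; apply/andP.
case: ifP => [/eqP w_j | w_j]; last first.
  by apply: src_scaled_cases; apply: complex_neq0; rewrite mulf_neq0 ?invr_neq0 ?w_j.
rewrite w_j mul0r (eq_sparse_or_nested (src_scaled0 _ _) (src_scaled0 _ _) (src_scaled0 _ _)).
apply/orP; right; apply/andP; split; first exact/subsetP.
by rewrite -card_bool_pair; apply/eq_leq/eq_card.
Qed.

Lemma card_bad_rows :
  (#|bad_rows| <= (2 ^ l0norm w - 1) * 4 ^ (n - l0norm w).+1)%N.
Proof.
set k := l0norm w; set z := #|[set j | w 0 j == 0]|.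
have -> : (n - k = z)%N.
  rewrite -[n]card_ord -(cardsC [set j | w 0 j == 0]) /k /l0norm.
  have -> : ~: [set j | w 0 j == 0] = [set j | w 0 j != 0] by apply/setP => j; rewrite !inE.
  by rewrite addnK.
have prod_h : (\prod_j h j = 4 ^ z)%N by rewrite prod_nat_if exp1n muln1.
have prod_g : (2 * \prod_j g j = 2 ^ k * 4 ^ z)%N.
  have := prod_nat_if (fun j => w 0 j == 0) 4 2; rewrite mulnC => <-.
  rewrite (bigD1 j0) //= (bigD1 j0 (P := xpredT)) //= /g eqxx (negbTE w_j0) mul1n.
  by congr (_ * _)%N; apply: eq_bigr => j /negbTE ->.
apply: leq_trans (leq_card_bigcup _) _.
apply: leq_trans (leq_sum _ (fun s _ => card_bad_rows_at s)) _.
rewrite sum_nat_const card_bool_pair prod_g prod_h expnS.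
by rewrite mulnBr mulnBl mul1n mulnCA mulnA.
Qed.

Lemma bad_rows_density :
  #|bad_rows|%:R / (4 ^ n)%:R <= ((2 ^ l0norm w)%:R - 1) / (4 ^ (l0norm w - 1))%:R :> R.
Proof.
set k := l0norm w.
have k_gt0 : (0 < k)%N by apply/card_gt0P; exists j0; rewrite inE.
have le_kn : (k <= n)%N by rewrite -[n]card_ord max_card.
rewrite -natr_pow2_sub1 ler_pdivrMr ?ltr0n ?expn_gt0 //.
rewrite mulrAC ler_pdivlMr ?ltr0n ?expn_gt0 // -!natrM ler_nat.
rewrite [in X in (_ <= _ * 4 ^ X)%N](_ : n = (n - k).+1 + (k - 1))%N; last by lia.
by rewrite expnD mulnA leq_mul2r card_bad_rows orbT.
Qed.

End BadRows.

Arguments bad_rows {R n} w j0.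
Arguments bad_rows_density {R n w j0}.

Theorem theorem2 (R : realType) (U D : nat) (hU : (0 < U)%N) (hD : (0 < D)%N)
  (w : 'rV[R[i]]_D) :
  prob_eclipsed U w <= p_e U w.
Proof.
rewrite /prob_eclipsed /p_e card_mx card_bool_pair mulnC expnM.
have [_ | /rV_neq0_entry[j0 w_j0]] := eqVneq w 0.
  rewrite /= ler_pdivrMr ?ltr0n ?expn_gt0 // mul1r ler_nat.
  by rewrite -expnM mulnC -card_bool_pair -card_mx max_card.
have l0_gt0 : (0 < l0norm w)%N by apply/card_gt0P; exists j0; rewrite inE.
have le_bad : (#|bad_rows w j0| <= 4 ^ D)%N.
  by apply: leq_trans (max_card _) _; rewrite card_mx card_bool_pair mul1n.
have N_gt0 : (0 < 4 ^ D)%N by rewrite expn_gt0.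
have := ratio_some_hit_le U N_gt0 le_bad (bad_rows_density w_j0) (pow2_ratio_le1 _ l0_gt0).
apply: le_trans.
by rewrite ler_pM2r ?invr_gt0 ?ltr0n ?expn_gt0 // ler_nat (card_eclipsed_le _ _ _ _ w_j0).
Qed.
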